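(* Let $\mathcal{H}$ be an infinite-dimensional separable Hilbert space with orthonormal bases $\{e_n\}$, $\{f_n\}$, $\mathcal{D}_e=\mathrm{span}\{e_n\}$, $\mathcal{D}_f=\mathrm{span}\{f_n\}$, $\mathcal{D}_e^2=\mathrm{span}\{|e_k\rangle\langle e_\ell|\}$. Let $\mathcal{Q}$ be a completely positive map from $\mathcal{D}_e^2$ into sesquilinear forms on $\mathcal{D}_f$ represented as $\mathcal{Q}(\rho)=\sum_\alpha K_\alpha\rho K_\alpha^\dagger$ by a countable family of generalized operators $K_\alpha$. If $\mathcal{Q}$ maps $\mathcal{D}_e^2$ into $\mathcal{B}(\mathcal{H})$ (i.e. each form $\mathcal{Q}(\rho)$ is given on $\mathcal{D}_f$ by a bounded operator), then each $K_\alpha$ maps $\mathcal{D}_e$ into $\mathcal{H}$.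
   Context: A generalized operator $K$ is a linear map from $\mathcal{D}_e$ into the conjugate algebraic dual of $\mathcal{D}_f$; write $\langle f|K|e\rangle$ for the value of $Ke$ at $f\in\mathcal{D}_f$, and $\langle e|K^\dagger|f\rangle=\langle f|K|e\rangle^*$. The representation $\mathcal{Q}(\rho)=\sum_\alpha K_\alpha\rho K_\alpha^\dagger$ means $\langle g|\mathcal{Q}(|\phi\rangle\langle\phi'|)|f\rangle=\sum_\alpha\langle g|K_\alpha|\phi\rangle\langle f|K_\alpha|\phi'\rangle^*$ for $\phi,\phi'\in\mathcal{D}_e$, $f,g\in\mathcal{D}_f$. Complete positivity: $\sum_{k,\ell}\langle\psi_k|\mathcal{Q}(|\phi_k\rangle\langle\phi_\ell|)|\psi_\ell\rangle\ge0$ for all finite families $\phi_k\in\mathcal{D}_e$, $\psi_k\in\mathcal{D}_f$. ''$K$ maps $\mathcal{D}_e$ into $\mathcal{H}$'' means each functional $Ke$ is of the form $f\mapsto\langle f|v\rangle$ with $v\in\mathcal{H}$. *)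

From HB Require Import structures.
From mathcomp Require Import all_boot all_order all_algebra.
From mathcomp Require Import reals.
From mathcomp Require Export complex.
Set Implicit Arguments. Unset Strict Implicit. Unset Printing Implicit Defensive.
Import Order.TTheory GRing.Theory Num.Theory.
Local Open Scope ring_scope.

Section Hilbert.
Variable R : realType.
Local Notation C := (R[i]).
Variable V : lmodType C.
(* ip x y = <x|y> : antilinear in x, linear in y (physics convention). *)
Variable ip : V -> V -> C.

Definition normH (x : V) : C := sqrtC (ip x x).

Definition is_hilbert : Prop :=
  [/\ (forall a x y z, ip x (a *: y + z) = a * ip x y + ip x z),
      (forall x y, ip x y = (ip y x)^*),
      (forall x, 0 <= ip x x),
      (forall x, ip x x = 0 -> x = 0) &
      (forall u : nat -> V,
         (forall eps : C, 0 < eps -> exists N, forall m n,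
              (N <= m)%N -> (N <= n)%N -> normH (u m - u n) < eps) ->
         exists l : V, forall eps : C, 0 < eps -> exists N, forall n,
              (N <= n)%N -> normH (u n - l) < eps)].

Definition in_span (e : nat -> V) (x : V) : Prop :=
  exists (N : nat) (c : nat -> C), x = \sum_(i < N) c i *: e i.

Definition is_ONB (e : nat -> V) : Prop :=
  (forall m n, ip (e m) (e n) = (m == n)%:R) /\
  (forall x eps, 0 < eps -> exists y, in_span e y /\ normH (x - y) < eps).

Definition bounded_op (B : V -> V) : Prop :=
  (forall a x y, B (a *: x + y) = a *: B x + B y) /\
  exists M : C, forall x, normH (B x) <= M * normH x.

Definition ketbra (phi phi' : V) : V -> V := fun x => ip phi' x *: phi.

Definition in_De2 (e : nat -> V) (rho : V -> V) : Prop :=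
  exists (N : nat) (c : nat -> nat -> C),
    forall x, rho x = \sum_(k < N) \sum_(l < N) c k l *: ketbra (e k) (e l) x.

(* A generalized operator K : D_e -> (D_f)^*, encoded as K f phi = <f|K|phi>,
   linear in phi in D_e and antilinear in f in D_f (values outside the
   spans are irrelevant). *)
Definition gen_op (e f : nat -> V) (K : V -> V -> C) : Prop :=
  (forall a g phi psi, in_span f g -> in_span e phi -> in_span e psi ->
      K g (a *: phi + psi) = a * K g phi + K g psi) /\
  (forall a g h phi, in_span f g -> in_span f h -> in_span e phi ->
      K (a *: g + h) phi = a^* * K g phi + K h phi).

Definition cvgC (u : nat -> C) (l : C) : Prop :=
  forall eps : C, 0 < eps -> exists N, forall n, (N <= n)%N -> `|u n - l| < eps.

End Hilbert.

From HB Require Import structures.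
From mathcomp Require Import all_boot all_order all_algebra.
From mathcomp Require Import reals complex classical_sets ring.
Import Order.TTheory GRing.Theory Num.Theory.
Local Open Scope ring_scope.
Set Implicit Arguments. Unset Strict Implicit.

(* Taking phi = phi' and g = h in the Kraus representation, the partial sums
   of sum_alpha |<g|K_alpha|phi>|^2 increase to <g|Q(|phi><phi|)|g> = <g|B g>,
   which is at most ||B|| <g|g> since the form is given by a bounded operator B.
   Hence g |-> <g|K_alpha|phi> is a bounded antilinear functional on D_f, and it
   is represented by v = sum_n <f_n|K_alpha|phi> f_n: the bound makes these
   coefficients square summable, so the partial sums of v are Cauchy, and
   completeness of H provides the limit. *)

Lemma nondecreasing_le (R : numDomainType) (s : nat -> R) :
  (forall n, s n <= s n.+1) -> forall n m, (n <= m)%N -> s n <= s m.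
Proof.
by move=> inc; apply: (homo_leq (r := <=%O) lexx) => // y x z; apply: le_trans.
Qed.

Lemma nondecreasing_bounded_cauchy (R : realType) (s : nat -> R) M :
  (forall n, s n <= s n.+1) -> (forall n, s n <= M) ->
  forall eps, 0 < eps -> exists N, forall n m, (N <= n)%N -> (n <= m)%N ->
    s m - s n < eps.
Proof.
move=> inc bnd eps eps0.
have hs : has_sup (range s).
  by split; [exists (s 0%N), 0%N | exists M => _ [n _ <-]].
have [_ [N _ <-] HN] := sup_adherent eps0 hs.
exists N => n m Nn nm.
have sm_sup : s m <= sup (range s) by apply: sup_upper_bound => //; exists m.
have sN_sn : s N <= s n by apply: nondecreasing_le.
rewrite ltrBlDr in HN; rewrite ltrBlDr.
apply: (le_lt_trans sm_sup); apply: (lt_le_trans HN).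
by rewrite addrC lerD2l.
Qed.

Lemma nondecreasing_bounded_cauchyC (R : realType) (s : nat -> R[i]) M :
  (forall n, 0 <= s n) -> (forall n, s n <= s n.+1) -> (forall n, s n <= M) ->
  forall eps, 0 < eps -> exists N, forall n m, (N <= n)%N -> (n <= m)%N ->
    s m - s n < eps.
Proof.
move=> s0 inc bnd eps e0.
have sRe n : s n = (complex.Re (s n))%:C%C by rewrite RRe_real // ger0_real.
have MRe : M = (complex.Re M)%:C%C.
  by rewrite RRe_real // ger0_real // (le_trans (s0 0%N) (bnd 0%N)).
have epsRe : eps = (complex.Re eps)%:C%C by rewrite RRe_real // ger0_real // ltW.
have [|||N HN] := nondecreasing_bounded_cauchy
  (s := fun n => complex.Re (s n)) (M := complex.Re M) _ _ (eps := complex.Re eps).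
- by move=> n; rewrite -lecR -!sRe.
- by move=> n; rewrite -lecR -sRe -MRe.
- by rewrite -ltcR -epsRe.
by exists N => n m Nn nm; rewrite (sRe m) (sRe n) epsRe -rmorphB /= ltcR; apply: HN.
Qed.

Lemma cvgC_nondecreasing_le_norm (R : realType) (w : nat -> R[i]) L :
  (forall n, 0 <= w n) -> (forall n, w n <= w n.+1) -> cvgC w L ->
  forall n, w n <= `|L|.
Proof.
move=> w0 inc cv n; apply/ler_addgt0Pr => eps e0.
have [N HN] := cv eps e0.
have wn_wm : w n <= w (maxn N n) by apply: nondecreasing_le; rewrite ?leq_maxr.
apply: (le_trans wn_wm); rewrite -(ger0_norm (w0 _)) -[w _](subrK L) addrC.
by apply: (le_trans (ler_normD _ _)); rewrite lerD2l ltW // HN // leq_maxl.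
Qed.

Lemma kraus_term_le (R : realType) (k : nat -> R[i]) L :
  cvgC (fun N => \sum_(b < N) k b * (k b)^*) L -> forall a, `|k a| ^+ 2 <= `|L|.
Proof.
move=> cv a.
have w0 n : 0 <= \sum_(b < n) k b * (k b)^*.
  by apply: sumr_ge0 => b _; apply: mul_conjC_ge0.
have inc n : \sum_(b < n) k b * (k b)^* <= \sum_(b < n.+1) k b * (k b)^*.
  by rewrite big_ord_recr /= lerDl mul_conjC_ge0.
apply: le_trans (cvgC_nondecreasing_le_norm w0 inc cv a.+1).
by rewrite big_ord_recr /= normCK lerDr w0.
Qed.

Section InnerProduct.
Variables (R : realType) (V : lmodType R[i]) (ip : V -> V -> R[i]).
Hypothesis linr : forall a x y z, ip x (a *: y + z) = a * ip x y + ip x z.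
Hypothesis sym : forall x y, ip x y = (ip y x)^*.
Hypothesis pos : forall x, 0 <= ip x x.
Hypothesis def : forall x, ip x x = 0 -> x = 0.

Lemma ipr0 x : ip x 0 = 0.
Proof.
have := linr 1 x 0 0; rewrite scaler0 addr0 mul1r => h.
by apply: (addrI (ip x 0)); rewrite addr0 -h.
Qed.

Lemma iprD x y z : ip x (y + z) = ip x y + ip x z.
Proof. by have := linr 1 x y z; rewrite scale1r mul1r. Qed.

Lemma iprZ a x y : ip x (a *: y) = a * ip x y.
Proof. by rewrite -[a *: y]addr0 linr ipr0 addr0. Qed.

Lemma iprN x y : ip x (- y) = - ip x y.
Proof. by rewrite -scaleN1r iprZ mulN1r. Qed.

Lemma iprB x y z : ip x (y - z) = ip x y - ip x z.
Proof. by rewrite iprD iprN. Qed.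

Lemma iplD x y z : ip (y + z) x = ip y x + ip z x.
Proof. by rewrite [ip y x]sym [ip z x]sym sym iprD rmorphD. Qed.

Lemma iplZ a x y : ip (a *: y) x = a^* * ip y x.
Proof. by rewrite [ip y x]sym sym iprZ rmorphM. Qed.

Lemma iplN x y : ip (- y) x = - ip y x.
Proof. by rewrite [ip y x]sym sym iprN rmorphN. Qed.

Lemma iplB x y z : ip (y - z) x = ip y x - ip z x.
Proof. by rewrite iplD iplN. Qed.

Lemma ipl0 x : ip 0 x = 0.
Proof. by rewrite sym ipr0 rmorph0. Qed.

Lemma ipr_sum x N (c : nat -> R[i]) (g : nat -> V) :
  ip x (\sum_(i < N) c i *: g i) = \sum_(i < N) c i * ip x (g i).
Proof.
elim: N => [|N IH]; first by rewrite !big_ord0 ipr0.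
by rewrite !big_ord_recr /= iprD IH iprZ.
Qed.

Lemma ipl_sum x N (c : nat -> R[i]) (g : nat -> V) :
  ip (\sum_(i < N) c i *: g i) x = \sum_(i < N) (c i)^* * ip (g i) x.
Proof.
elim: N => [|N IH]; first by rewrite !big_ord0 ipl0.
by rewrite !big_ord_recr /= iplD IH iplZ.
Qed.

Lemma normH_ge0 x : 0 <= normH ip x.
Proof. by rewrite sqrtC_ge0. Qed.

Lemma ip_cauchy_schwarz x y : `|ip x y| <= normH ip x * normH ip y.
Proof.
rewrite /normH.
have [y0|d0] := eqVneq (ip y y) 0.
  by rewrite (def y0) ipr0 normr0 mulr_ge0 ?sqrtC_ge0.
have dpos : 0 < ip y y by rewrite lt_def d0 pos.
have dc : (ip y y)^* = ip y y by apply/conj_Creal/ger0_real.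
(* expand 0 <= <x - t y | x - t y> for t = <y|x> / <y|y> *)
have := pos (x - (ip y x / ip y y) *: y).
rewrite iplB !iprB iplZ !iprZ iplZ [ip y x]sym.
set q := ip x y; set d := ip y y.
rewrite fmorph_div /= conjCK dc -/d.
have -> : ip x x - q^* / d * q - (q / d * q^* - q^* / d * (q / d * d)) =
          ip x x - `|q| ^+ 2 / d by rewrite normCK; field.
rewrite subr_ge0 ler_pdivrMr // => H.
by rewrite -(sqrCK (normr_ge0 _)) -sqrtCM ?nnegrE ?pos // ler_sqrtC ?nnegrE
  ?mulr_ge0 ?pos.
Qed.

Lemma bounded_op_quadratic_le (B : V -> V) M :
  (forall x, normH ip (B x) <= M * normH ip x) ->
  forall g, `|ip g (B g)| <= M * ip g g.
Proof.
move=> HB g; apply: le_trans (ip_cauchy_schwarz g (B g)) _.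
apply: le_trans (ler_wpM2l (normH_ge0 g) (HB g)) _.
by rewrite mulrCA -expr2 sqrtCK.
Qed.

Lemma ketbra_in_De2 e phi phi' : in_span e phi -> in_span e phi' ->
  in_De2 ip e (ketbra ip phi phi').
Proof.
move=> [N [a ->]] [N' [b ->]].
exists (maxn N N'), (fun k l => (if (k < N)%N then a k else 0) *
                             (if (l < N')%N then b l else 0)^*) => x.
have pad n n' (c : nat -> R[i]) (v : nat -> V) : (n <= n')%N ->
    \sum_(i < n) c i *: v i = \sum_(i < n') (if (i < n)%N then c i else 0) *: v i.
  move=> nn'; rewrite -(subnKC nn') big_split_ord /= [X in _ + X]big1 ?addr0.
    by apply: eq_bigr => i _; rewrite ltn_ord.
  by move=> i _; rewrite ltnNge leq_addr scale0r.
rewrite /ketbra (pad N (maxn N N')) ?leq_maxl // (pad N' (maxn N N')) ?leq_maxr //.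
rewrite (ipl_sum _ _ (fun l => if (l < N')%N then b l else 0)) scaler_sumr.
apply: eq_bigr => l _.
rewrite scaler_suml; apply: eq_bigr => k _.
by rewrite !scalerA; congr (_ *: _); ring.
Qed.

End InnerProduct.

Lemma in_span_basis (R : realType) (V : lmodType R[i]) (f : nat -> V) n :
  in_span f (f n).
Proof.
exists n.+1, (fun i => (i == n)%:R); rewrite big_ord_recr /= eqxx scale1r.
by rewrite big1 ?add0r // => i _; rewrite ltn_eqF ?scale0r.
Qed.

Lemma antilinear_sum (R : realType) (V : lmodType R[i]) (f : nat -> V)
    (F : V -> R[i]) :
  (forall a g h, in_span f g -> in_span f h -> F (a *: g + h) = a^* * F g + F h) ->
  forall N (c : nat -> R[i]),
    F (\sum_(i < N) c i *: f i) = \sum_(i < N) (c i)^* * F (f i).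
Proof.
move=> Fanti; have span0 : in_span f 0 by exists 0%N, (fun=> 0); rewrite big_ord0.
have F0 : F 0 = 0.
  have := Fanti 1 0 0 span0 span0; rewrite scaler0 addr0 rmorph1 mul1r => h.
  by apply: (addrI (F 0)); rewrite addr0 -h.
elim=> [|N IH] c; first by rewrite !big_ord0.
rewrite !big_ord_recr /= addrC Fanti ?IH 1?addrC //; last by exists N, c.
exact: in_span_basis.
Qed.

Section RieszOnSpan.
Variables (R : realType) (V : lmodType R[i]) (ip : V -> V -> R[i]) (f : nat -> V).
Hypothesis linr : forall a x y z, ip x (a *: y + z) = a * ip x y + ip x z.
Hypothesis sym : forall x y, ip x y = (ip y x)^*.
Hypothesis pos : forall x, 0 <= ip x x.
Hypothesis def : forall x, ip x x = 0 -> x = 0.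
Hypothesis complete : forall u : nat -> V,
  (forall eps : R[i], 0 < eps -> exists N, forall m n,
     (N <= m)%N -> (N <= n)%N -> normH ip (u m - u n) < eps) ->
  exists l : V, forall eps : R[i], 0 < eps -> exists N, forall n,
     (N <= n)%N -> normH ip (u n - l) < eps.
Hypothesis ortho : forall m n, ip (f m) (f n) = (m == n)%:R.

Lemma ip_basis_sum m N (c : nat -> R[i]) : (m < N)%N ->
  ip (f m) (\sum_(i < N) c i *: f i) = c m.
Proof.
move=> mN; rewrite (ipr_sum linr) (bigD1 (Ordinal mN)) //= ortho eqxx mulr1.
rewrite big1 ?addr0 // => j /negbTE.
by rewrite ortho -val_eqE eq_sym => ->; rewrite mulr0.
Qed.

Variables (F : V -> R[i]) (M : R[i]).
Hypothesis F_antilinear : forall a g h, in_span f g -> in_span f h ->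
  F (a *: g + h) = a^* * F g + F h.
Hypothesis F_bounded : forall g, in_span f g -> `|F g| ^+ 2 <= M * ip g g.

Let c n := F (f n).
Let u N := \sum_(i < N) c i *: f i.
Let S N := \sum_(i < N) `|c i| ^+ 2.

Let S_ge0 n : 0 <= S n.
Proof. by apply: sumr_ge0 => i _; rewrite exprn_ge0. Qed.

Let S_nondecreasing n : S n <= S n.+1.
Proof. by rewrite /S big_ord_recr /= lerDl exprn_ge0. Qed.

Lemma ip_partial_sums a b : (a <= b)%N -> ip (u a) (u b) = S a.
Proof.
move=> ab; rewrite /u (ipl_sum linr sym); apply: eq_bigr => i _.
by rewrite ip_basis_sum ?normCKC // (leq_trans (ltn_ord i) ab).
Qed.

Lemma partial_sum_sq_le N : S N <= `|M|.
Proof.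
have := F_bounded (ex_intro _ N (ex_intro _ c erefl)).
have -> : F (u N) = S N.
  by rewrite antilinear_sum //; apply: eq_bigr => i _; rewrite normCKC.
rewrite ip_partial_sums // ger0_norm // expr2.
have [-> _|SN0] := eqVneq (S N) 0; first exact: normr_ge0.
rewrite ler_pM2r ?lt_def ?SN0 ?S_ge0 // => SN_M.
by apply: le_trans SN_M (real_ler_norm (ger0_real (le_trans (S_ge0 N) SN_M))).
Qed.

Lemma partial_sums_cauchy (eps : R[i]) : 0 < eps -> exists N, forall m n,
  (N <= m)%N -> (N <= n)%N -> normH ip (u m - u n) < eps.
Proof.
move=> e0; have [N HN] := nondecreasing_bounded_cauchyC S_ge0 S_nondecreasing
  partial_sum_sq_le (exprn_gt0 2 e0).
exists N => m n; wlog nm : m n / (n <= m)%N => [W Nm Nn|Nm Nn].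
  have [/W|/ltnW mn] := leqP n m; first exact.
  by rewrite /normH -opprB (iplN linr sym) (iprN linr) opprK; apply: W.
rewrite /normH; have -> : ip (u m - u n) (u m - u n) = S m - S n.
  rewrite (iplB linr sym) !(iprB linr) [ip (u m) (u n)]sym !ip_partial_sums //.
  by rewrite conj_Creal ?ger0_real // subrr subr0.
rewrite -(sqrCK (ltW e0)) ltr_sqrtC ?nnegrE ?HN ?exprn_ge0 ?(ltW e0) //.
by rewrite subr_ge0 nondecreasing_le.
Qed.

Lemma riesz_span : exists l : V, forall g, in_span f g -> F g = ip g l.
Proof.
have [l Hl] := complete partial_sums_cauchy.
have ip_basis_l m : ip (f m) l = c m.
  apply/eqP; rewrite -subr_eq0 -normr_eq0 eq_le normr_ge0 andbT.
  apply/ler_addgt0Pr => eps e0; rewrite add0r; apply: ltW.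
  have [N HN] := Hl eps e0.
  pose n := maxn N m.+1.
  have -> : ip (f m) l - c m = - ip (f m) (u n - l).
    by rewrite (iprB linr) ip_basis_sum ?opprB // leq_maxr.
  rewrite normrN; apply: le_lt_trans (ip_cauchy_schwarz linr sym pos def _ _) _.
  by rewrite /normH ortho eqxx sqrtC1 mul1r HN // leq_maxl.
exists l => _ [N [d ->]].
rewrite antilinear_sum // (ipl_sum linr sym); apply: eq_bigr => i _.
by rewrite ip_basis_l.
Qed.

End RieszOnSpan.

Unset Implicit Arguments.
Theorem corollary6p4 (R : realType) (V : lmodType R[i]) (ip : V -> V -> R[i])
  (e f : nat -> V) (Q : (V -> V) -> V -> V -> R[i])
  (K : nat -> V -> V -> R[i]) :
  is_hilbert ip ->
  is_ONB ip e -> is_ONB ip f ->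
  (forall a rho1 rho2 g h, in_De2 ip e rho1 -> in_De2 ip e rho2 ->
     in_span f g -> in_span f h ->
     Q (fun x => a *: rho1 x + rho2 x) g h = a * Q rho1 g h + Q rho2 g h) ->
  (forall rho a g g' h, in_De2 ip e rho ->
     in_span f g -> in_span f g' -> in_span f h ->
     Q rho (a *: g + g') h = a^* * Q rho g h + Q rho g' h /\
     Q rho h (a *: g + g') = a * Q rho h g + Q rho h g') ->
  (forall (n : nat) (phi psi : 'I_n -> V),
     (forall k, in_span e (phi k)) -> (forall k, in_span f (psi k)) ->
     0 <= \sum_(k < n) \sum_(l < n) Q (ketbra ip (phi k) (phi l)) (psi k) (psi l)) ->
  (forall alpha, gen_op e f (K alpha)) ->
  (forall phi phi' g h, in_span e phi -> in_span e phi' ->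
     in_span f g -> in_span f h ->
     cvgC (fun N => \sum_(alpha < N) K alpha g phi * (K alpha h phi')^*)
          (Q (ketbra ip phi phi') g h)) ->
  (forall rho, in_De2 ip e rho -> exists B : V -> V, bounded_op ip B /\
     forall g h, in_span f g -> in_span f h -> Q rho g h = ip g (B h)) ->
  forall alpha phi, in_span e phi ->
    exists v : V, forall g, in_span f g -> K alpha g phi = ip g v.
Proof.
move=> [linr sym pos def complete] _ [ortho _] _ _ _ Kgen Kraus Qbd alpha phi phie.
have [B [[_ [M HB]] QB]] := Qbd _ (ketbra_in_De2 linr sym phie phie).
apply: (riesz_span linr sym pos def complete ortho (M := M)).
  by move=> a g h gs hs; apply: (Kgen alpha).2.
move=> g gs; apply: le_trans (bounded_op_quadratic_le linr sym pos def HB g).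
rewrite -QB //; exact: (kraus_term_le (k := fun b => K b g phi)
                          (Kraus _ _ _ _ phie phie gs gs)).
Qed.
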